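(* The functor $\tau:\mathbf{GrpwTop}\to\mathbf{TopGrp}$ satisfies: (1) $\tau$ preserves finite products: for groups with topology $G,H$ (with $G\times H$ given the product topology), the identity $\tau(G\times H)\to\tau(G)\times\tau(H)$ is an isomorphism of topological groups. (2) If a homomorphism $f:G\to H$ of groups with topology is a topological quotient map, then $\tau(f):\tau(G)\to\tau(H)$ is a quotient map. (3) A group with topology $G$ is a topological group if and only if $G=\tau(G)$ (as topological spaces). (4) A group with topology $G$ is discrete if and only if $\tau(G)$ is discrete.
   Context: A group with topology is a group with an arbitrary topology; $\mathbf{GrpwTop}$ is the category of such with continuous homomorphisms, $\mathbf{TopGrp}$ the category of topological groups. $F_M(S)$ is the free (Markov) topological group on a space $S$. For $G$ a group with topology, $\tau(G)$ is $G$ with the quotient topology with respect to the multiplication epimorphism $m_G:F_M(G)\to G$ sending each generator $g$ to $g$; on morphisms $\tau$ is the identity on underlying homomorphisms. *)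

From Stdlib Require Import Classical.
Set Implicit Arguments.

Definition opens (X : Type) := (X -> Prop) -> Prop.

Record topology (X : Type) := Topology {
  topen :> opens X;
  topen_full : topen (fun _ => True);
  topen_inter : forall U V, topen U -> topen V -> topen (fun x => U x /\ V x);
  topen_union : forall (F : (X -> Prop) -> Prop),
      (forall U, F U -> topen U) -> topen (fun x => exists U, F U /\ U x)
}.

Record group (X : Type) := Group {
  gmul : X -> X -> X;
  ginv : X -> X;
  gone : X;
  gassoc : forall x y z, gmul x (gmul y z) = gmul (gmul x y) z;
  gmul1 : forall x, gmul gone x = x;
  gmulV : forall x, gmul (ginv x) x = gone
}.

Record grpwtop := GrpwTop {
  gcar :> Type;
  ggrp : group gcar;
  gtop : topology gcar
}.

Definition continuous {X Y : Type} (oX : opens X) (oY : opens Y) (f : X -> Y) :=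
  forall V, oY V -> oX (fun x => V (f x)).

Definition prod_open {X Y : Type} (oX : opens X) (oY : opens Y) : opens (X * Y) :=
  fun W => forall p, W p -> exists U V, oX U /\ oY V /\ U (fst p) /\ V (snd p) /\
             (forall q, U (fst q) -> V (snd q) -> W q).

Definition quotient_map {X Y : Type} (oX : opens X) (oY : opens Y) (f : X -> Y) :=
  (forall y, exists x, f x = y) /\ (forall V, oY V <-> oX (fun x => V (f x))).

Definition discrete {X : Type} (oX : opens X) := forall U : X -> Prop, oX U.

Definition is_hom {G H : grpwtop} (f : G -> H) :=
  forall x y, f (gmul (ggrp G) x y) = gmul (ggrp H) (f x) (f y).

Definition is_topological_group (G : grpwtop) :=
  continuous (prod_open (gtop G) (gtop G)) (gtop G)
             (fun p => gmul (ggrp G) (fst p) (snd p)) /\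
  continuous (gtop G) (gtop G) (ginv (ggrp G)).

Definition free_markov {X : Type} (tX : opens X) (F : grpwtop) (s : X -> F) :=
  is_topological_group F /\ continuous tX (gtop F) s /\
  forall (K : grpwtop) (phi : X -> K),
    is_topological_group K -> continuous tX (gtop K) phi ->
    exists psi : F -> K,
      is_hom psi /\ continuous (gtop F) (gtop K) psi /\ (forall x, psi (s x) = phi x) /\
      (forall psi' : F -> K, is_hom psi' -> continuous (gtop F) (gtop K) psi' ->
         (forall x, psi' (s x) = phi x) -> forall w, psi' w = psi w).

(* The opens of tau(G): quotient topology on G w.r.t. the multiplication
   epimorphism m_G : F_M(G) -> G (the homomorphism with m_G (s g) = g),
   for the free Markov topological group (F_M(G), s) on G. *)
Definition tau_open (G : grpwtop) : opens G :=
  fun U => forall (F : grpwtop) (s : G -> F) (m : F -> G),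
    free_markov (gtop G) F s -> is_hom m -> (forall g, m (s g) = g) ->
    topen (gtop F) (fun w => U (m w)).

Section Prod.
Variables G H : grpwtop.

Definition prod_group : group (G * H).
Proof.
refine (@Group (G * H)
  (fun p q => (gmul (ggrp G) (fst p) (fst q), gmul (ggrp H) (snd p) (snd q)))
  (fun p => (ginv (ggrp G) (fst p), ginv (ggrp H) (snd p)))
  (gone (ggrp G), gone (ggrp H)) _ _ _).
- intros [] [] []; simpl; rewrite !gassoc; reflexivity.
- intros []; simpl; rewrite !gmul1; reflexivity.
- intros []; simpl; rewrite !gmulV; reflexivity.
Defined.

Definition prod_topology : topology (G * H).
Proof.
refine (@Topology (G * H) (prod_open (gtop G) (gtop H)) _ _ _).
- intros p _. exists (fun _ => True), (fun _ => True).
  repeat split; auto using topen_full.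
- intros U V hU hV p [Up Vp].
  destruct (hU p Up) as [A [B [hA [hB [Ap [Bp hAB]]]]]].
  destruct (hV p Vp) as [C [D [hC [hD [Cp [Dp hCD]]]]]].
  exists (fun x => A x /\ C x), (fun y => B y /\ D y).
  split; [apply topen_inter; auto|].
  split; [apply topen_inter; auto|].
  split; [split; auto|]. split; [split; auto|].
  intros r [] []; split; auto.
- intros F hF p [U [FU Up]].
  destruct (hF U FU p Up) as [A [B [hA [hB [Ap [Bp hAB]]]]]].
  exists A, B; repeat split; auto. intros q Aq Bq; exists U; auto.
Defined.

Definition prod_gwt : grpwtop := @GrpwTop (G * H) prod_group prod_topology.
End Prod.

(* tau(G) is the finest group topology on G coarser than the topology of G.
   Indeed the free Markov group on G exists (the free group with the finest
   group topology making the generators continuous), m_G pushes its topology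
   forward to a group topology coarser than that of G, and conversely the
   universal property makes m_G continuous into any such group topology.
   With this description everything is a matter of transporting group
   topologies: (1) the slices x |-> (x, 1) and y |-> (1, y) are continuous
   homomorphisms, and a product of group topologies is a group topology;
   (2) group topologies can be pulled back and, along surjective
   homomorphisms, pushed forward; (3) and (4) are immediate. *)
From Stdlib Require Import Classical FunctionalExtensionality PropExtensionality
  ProofIrrelevance ClassicalEpsilon List Relations.
Import ListNotations.
Set Implicit Arguments.
Unset Strict Implicit.

Lemma opens_ext (X : Type) (O : opens X) (U V : X -> Prop) :
  O U -> (forall x, U x <-> V x) -> O V.
Proof.
  intros hU e. replace V with U; auto.
  apply functional_extensionality; intro x; apply propositional_extensionality; auto.
Qed.

Lemma topen_local (X : Type) (T : topology X) (U : X -> Prop) :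
  (forall x, U x -> exists V, topen T V /\ V x /\ forall y, V y -> U y) -> topen T U.
Proof.
  intros h.
  apply opens_ext with (U := fun x => exists V, (topen T V /\ forall y, V y -> U y) /\ V x).
  - apply topen_union. intros V [hV _]; auto.
  - intros x; split.
    + intros [V [[_ hV] Vx]]; auto.
    + intros Ux. destruct (h x Ux) as [V [hV [Vx hVU]]]. exists V; auto.
Qed.

Lemma topen_empty (X : Type) (T : topology X) : topen T (fun _ => False).
Proof.
  apply opens_ext with (U := fun x => exists U, (fun _ : X -> Prop => False) U /\ U x).
  - apply topen_union. intros U [].
  - intros x; split; [intros [U [[] _]] | intros []].
Qed.

Section GroupFacts.
Variables (X : Type) (g : group X).
Notation "a * b" := (gmul g a b).

Lemma gmulrV x : x * ginv g x = gone g.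
Proof.
  set (y := x * ginv g x).
  assert (yy : y * y = y).
  { unfold y. rewrite <- gassoc, (gassoc g (ginv g x) x), gmulV, gmul1. reflexivity. }
  assert (h : ginv g y * (y * y) = ginv g y * y) by (rewrite yy; reflexivity).
  rewrite gassoc, gmulV, gmul1 in h. exact h.
Qed.

Lemma gmulr1 x : x * gone g = x.
Proof. rewrite <- (gmulV g x), gassoc, gmulrV, gmul1. reflexivity. Qed.

Lemma ginv_uniq a b : a * b = gone g -> a = ginv g b.
Proof.
  intros h. rewrite <- (gmulr1 a), <- (gmulrV b), gassoc, h, gmul1. reflexivity.
Qed.
End GroupFacts.

Definition ghom {X Y : Type} (gX : group X) (gY : group Y) (f : X -> Y) :=
  forall x y, f (gmul gX x y) = gmul gY (f x) (f y).

Lemma ghom_one X Y (gX : group X) (gY : group Y) f :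
  ghom gX gY f -> f (gone gX) = gone gY.
Proof.
  intros hf. set (e := f (gone gX)).
  assert (ee : gmul gY e e = e) by (unfold e; rewrite <- hf, gmul1; reflexivity).
  assert (h : gmul gY (ginv gY e) (gmul gY e e) = gmul gY (ginv gY e) e) by (rewrite ee; reflexivity).
  rewrite gassoc, gmulV, gmul1 in h. exact h.
Qed.

Lemma ghom_inv X Y (gX : group X) (gY : group Y) f x :
  ghom gX gY f -> f (ginv gX x) = ginv gY (f x).
Proof. intros hf. apply ginv_uniq. rewrite <- hf, gmulV. apply (ghom_one hf). Qed.

Definition group_topology {X : Type} (g : group X) (O : opens X) :=
  continuous (prod_open O O) O (fun p => gmul g (fst p) (snd p)) /\
  continuous O O (ginv g).

Lemma group_topology_ext X (g : group X) (O1 O2 : opens X) :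
  group_topology g O1 -> (forall U, O1 U <-> O2 U) -> group_topology g O2.
Proof.
  intros h e. replace O2 with O1; auto.
  apply functional_extensionality; intro U; apply propositional_extensionality; auto.
Qed.

Lemma group_topology_transl X (g : group X) (T : topology X) c V :
  group_topology g T -> topen T V -> topen T (fun z => V (gmul g z c)).
Proof.
  intros [hm _] hV. apply topen_local. intros z hz.
  destruct (hm V hV (z, c) hz) as [A [B [hA [hB [Az [Bc hAB]]]]]].
  exists A; repeat split; auto. intros y Ay. apply (hAB (y, c)); auto.
Qed.

Lemma discrete_group_topology X (g : group X) (O : opens X) :
  discrete O -> group_topology g O.
Proof.
  intros d. split.
  - intros W _ p Wp. exists (fun x => x = fst p), (fun y => y = snd p).
    repeat split; auto. intros [q1 q2] e1 e2. simpl in *. subst. destruct p; auto.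
  - intros V _. apply d.
Qed.

Definition indiscrete (X : Type) : topology X.
Proof.
  refine (@Topology X (fun U => (forall x, U x) \/ (forall x, ~ U x)) _ _ _).
  - left; auto.
  - intros U V [hU|hU] [hV|hV].
    + left; auto.
    + right; intros x [_ h]; exact (hV x h).
    + right; intros x [h _]; exact (hU x h).
    + right; intros x [h _]; exact (hU x h).
  - intros F hF. destruct (classic (exists U, F U /\ forall x, U x)) as [[U [FU hU]]|n].
    + left; intros x; exists U; auto.
    + right; intros x [U [FU Ux]]. destruct (hF U FU) as [h|h].
      * apply n; exists U; auto.
      * exact (h x Ux).
Defined.

Lemma indiscrete_continuous X Y (T : topology X) (f : X -> Y) :
  continuous T (indiscrete Y) f.
Proof.
  intros V [h|h].
  - apply opens_ext with (U := fun _ => True); [apply topen_full | intros x; split; auto].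
  - apply opens_ext with (U := fun _ => False); [apply topen_empty|].
    intros x; split; [intros [] | apply h].
Qed.

Lemma indiscrete_group_topology X (g : group X) : group_topology g (indiscrete X).
Proof.
  split.
  - intros V [h|h].
    + intros p _. exists (fun _ => True), (fun _ => True). simpl. repeat split; auto.
    + intros p hp. exfalso; exact (h _ hp).
  - intros V [h|h]; [left|right]; intros x; apply h.
Qed.

Definition initial_top X Y (T : topology Y) (f : X -> Y) : topology X.
Proof.
  refine (@Topology X (fun U => exists V, topen T V /\ forall x, U x <-> V (f x)) _ _ _).
  - exists (fun _ => True); split; [apply topen_full | tauto].
  - intros U V [U' [hU eU]] [V' [hV eV]]. exists (fun y => U' y /\ V' y); split.
    + apply topen_inter; auto.
    + intros x; rewrite eU, eV; tauto.
  - intros F hF.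
    exists (fun y => exists V, (topen T V /\ exists U, F U /\ forall x, U x <-> V (f x)) /\ V y).
    split.
    + apply topen_union. intros V [h _]; auto.
    + intros x; split.
      * intros [U [FU Ux]]. destruct (hF U FU) as [V [hV eV]].
        exists V; split; [split; [auto | exists U; auto] | apply eV; auto].
      * intros [V [[_ [U [FU eU]]] Vx]]. exists U; split; auto. apply eU; auto.
Defined.

Lemma initial_top_preimage X Y (T : topology Y) (f : X -> Y) V :
  topen T V -> topen (initial_top T f) (fun x => V (f x)).
Proof. intros hV. exists V; split; [exact hV | tauto]. Qed.

Lemma initial_group_topology X Y (gX : group X) (gY : group Y) (T : topology Y) (f : X -> Y) :
  ghom gX gY f -> group_topology gY T -> group_topology gX (initial_top T f).
Proof.
  intros hf [hm hi]. split.
  - intros W [V [hV eV]] p Wp.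
    apply eV in Wp. rewrite hf in Wp.
    destruct (hm V hV (f (fst p), f (snd p)) Wp) as [A [B [hA [hB [Aa [Bb hAB]]]]]].
    exists (fun x => A (f x)), (fun x => B (f x)).
    repeat split; try apply initial_top_preimage; auto.
    intros q Aq Bq. apply eV. rewrite hf. apply (hAB (f (fst q), f (snd q))); auto.
  - intros W [V [hV eV]]. exists (fun y => V (ginv gY y)); split.
    + apply hi; auto.
    + intros x. rewrite eV, (ghom_inv _ hf). tauto.
Qed.

Definition quotient_top X Y (T : topology X) (f : X -> Y) : topology Y.
Proof.
  refine (@Topology Y (fun V => topen T (fun x => V (f x))) _ _ _).
  - apply topen_full.
  - intros U V hU hV. apply topen_inter; auto.
  - intros F hF.
    apply opens_ext with
      (U := fun x => exists U', (exists U, F U /\ forall x, U' x <-> U (f x)) /\ U' x).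
    + apply topen_union. intros U' [U [FU eU]].
      apply opens_ext with (U := fun x => U (f x)); [apply hF; auto | intros x; rewrite eU; tauto].
    + intros x; split.
      * intros [U' [[U [FU eU]] hx]]. exists U; split; auto. apply eU; auto.
      * intros [U [FU hx]]. exists (fun x => U (f x)). split; auto. exists U; split; auto; tauto.
Defined.

(* f^-1 (f A) is the union of the right translates of A by the kernel of f. *)
Lemma quotient_image_open X Y (gX : group X) (gY : group Y) (T : topology X) (f : X -> Y) A :
  ghom gX gY f -> group_topology gX T -> topen T A ->
  topen (quotient_top T f) (fun y => exists x, A x /\ f x = y).
Proof.
  intros hf hT hA. simpl.
  apply opens_ext with (U := fun x => exists U,
      (exists k, f k = gone gY /\ U = fun z => A (gmul gX z k)) /\ U x).
  - apply topen_union. intros U [k [_ ->]]. apply group_topology_transl; auto.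
  - intros x; split.
    + intros [U [[k [hk ->]] hx]]. exists (gmul gX x k); split; auto.
      rewrite hf, hk, gmulr1. reflexivity.
    + intros [a [ha e]]. exists (fun z => A (gmul gX z (gmul gX (ginv gX x) a))). split.
      * exists (gmul gX (ginv gX x) a). split; auto.
        rewrite hf, (ghom_inv _ hf), e, gmulV. reflexivity.
      * rewrite gassoc, gmulrV, gmul1. exact ha.
Qed.

Lemma quotient_group_topology X Y (gX : group X) (gY : group Y) (T : topology X) (f : X -> Y) :
  ghom gX gY f -> (forall y, exists x, f x = y) -> group_topology gX T ->
  group_topology gY (quotient_top T f).
Proof.
  intros hf sf hT. pose proof hT as [hm hi]. split.
  - intros W hW p Wp. simpl in hW.
    destruct (sf (fst p)) as [x ex]. destruct (sf (snd p)) as [y ey].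
    assert (Wxy : W (f (gmul gX x y))) by (rewrite hf, ex, ey; auto).
    destruct (hm _ hW (x, y) Wxy) as [A [B [hA [hB [Ax [By hAB]]]]]].
    exists (fun c => exists x', A x' /\ f x' = c), (fun c => exists y', B y' /\ f y' = c).
    repeat split; try apply (quotient_image_open hf hT); auto.
    + exists x; auto.
    + exists y; auto.
    + intros q [x1 [Ax1 e1]] [y1 [By1 e2]]. rewrite <- e1, <- e2, <- hf.
      apply (hAB (x1, y1)); auto.
  - intros V hV. simpl in *. apply opens_ext with (U := fun x => V (f (ginv gX x))).
    + apply (hi (fun x => V (f x))); auto.
    + intros x; rewrite (ghom_inv _ hf); tauto.
Qed.

Lemma prod_open_mono X Y (O1 O1' : opens X) (O2 O2' : opens Y) :
  (forall U, O1 U -> O1' U) -> (forall U, O2 U -> O2' U) ->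
  forall W, prod_open O1 O2 W -> prod_open O1' O2' W.
Proof.
  intros h1 h2 W hW p Wp. destruct (hW p Wp) as [U [V [hU [hV r]]]].
  exists U, V; auto.
Qed.

Lemma prod_open_rect X Y (O1 : opens X) (O2 : opens Y) A B :
  O1 A -> O2 B -> prod_open O1 O2 (fun q => A (fst q) /\ B (snd q)).
Proof. intros hA hB p [Ap Bp]. exists A, B; repeat split; auto. Qed.

Lemma prod_open_slicel X Y (T1 : topology X) (O2 : opens Y) W c :
  prod_open T1 O2 W -> topen T1 (fun x => W (x, c)).
Proof.
  intros h. apply topen_local. intros x Wx.
  destruct (h _ Wx) as [U1 [U2 [o1 [o2 [u1 [u2 hU]]]]]].
  exists U1; repeat split; auto; intros y Uy; apply (hU (y, c)); auto.
Qed.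

Lemma prod_open_slicer X Y (O1 : opens X) (T2 : topology Y) W c :
  prod_open O1 T2 W -> topen T2 (fun y => W (c, y)).
Proof.
  intros h. apply topen_local. intros y Wy.
  destruct (h _ Wy) as [U1 [U2 [o1 [o2 [u1 [u2 hU]]]]]].
  exists U2; repeat split; auto; intros z Uz; apply (hU (c, z)); auto.
Qed.

Lemma prod_group_topology (G H : grpwtop) (O1 : opens G) (O2 : opens H) :
  group_topology (ggrp G) O1 -> group_topology (ggrp H) O2 ->
  group_topology (prod_group G H) (prod_open O1 O2).
Proof.
  intros [m1 i1] [m2 i2]. split.
  - intros W hW [[a1 a2] [b1 b2]] Wp. simpl in Wp.
    destruct (hW _ Wp) as [U [V [hU [hV [Ua [Va hUV]]]]]]. simpl in Ua, Va.
    destruct (m1 U hU (a1, b1) Ua) as [A1 [B1 [hA1 [hB1 [A1a [B1b h1]]]]]].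
    destruct (m2 V hV (a2, b2) Va) as [A2 [B2 [hA2 [hB2 [A2a [B2b h2]]]]]].
    exists (fun q => A1 (fst q) /\ A2 (snd q)), (fun q => B1 (fst q) /\ B2 (snd q)).
    repeat split; try apply prod_open_rect; simpl; auto.
    intros [[x1 x2] [y1 y2]] [Ax1 Ax2] [By1 By2]. simpl in *. apply hUV; simpl.
    + apply (h1 (x1, y1)); auto.
    + apply (h2 (x2, y2)); auto.
  - intros W hW [x1 x2] Wx. simpl in Wx.
    destruct (hW _ Wx) as [U [V [hU [hV [Ua [Va hUV]]]]]]. simpl in Ua, Va.
    exists (fun y => U (ginv (ggrp G) y)), (fun y => V (ginv (ggrp H) y)).
    repeat split; auto; intros [y1 y2] h1 h2; apply hUV; simpl in *; auto.
Qed.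

Definition join_top X (T1 T2 : topology X) : topology X.
Proof.
  refine (@Topology X (fun U => forall x, U x -> exists V1 V2, topen T1 V1 /\ topen T2 V2 /\
             V1 x /\ V2 x /\ forall y, V1 y -> V2 y -> U y) _ _ _).
  - intros x _. exists (fun _ => True), (fun _ => True). repeat split; auto; apply topen_full.
  - intros U V hU hV x [Ux Vx].
    destruct (hU x Ux) as [A1 [A2 [a1 [a2 [xa1 [xa2 ha]]]]]].
    destruct (hV x Vx) as [B1 [B2 [b1 [b2 [xb1 [xb2 hb]]]]]].
    exists (fun y => A1 y /\ B1 y), (fun y => A2 y /\ B2 y).
    repeat split; try apply topen_inter; auto; [apply ha|apply hb]; tauto.
  - intros F hF x [U [FU Ux]].
    destruct (hF U FU x Ux) as [A1 [A2 [a1 [a2 [xa1 [xa2 ha]]]]]].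
    exists A1, A2; repeat split; auto. intros y h1 h2. exists U; auto.
Defined.

Lemma join_group_topology X (g : group X) (T1 T2 : topology X) :
  group_topology g T1 -> group_topology g T2 -> group_topology g (join_top T1 T2).
Proof.
  intros [m1 i1] [m2 i2]. split.
  - intros W hW p Wp. simpl in hW.
    destruct (hW _ Wp) as [V1 [V2 [v1 [v2 [x1 [x2 hv]]]]]].
    destruct (m1 V1 v1 p x1) as [A1 [B1 [hA1 [hB1 [A1a [B1b h1]]]]]].
    destruct (m2 V2 v2 p x2) as [A2 [B2 [hA2 [hB2 [A2a [B2b h2]]]]]].
    exists (fun y => A1 y /\ A2 y), (fun y => B1 y /\ B2 y). repeat split; auto.
    + simpl. intros y []. exists A1, A2; repeat split; auto.
    + simpl. intros y []. exists B1, B2; repeat split; auto.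
    + intros q [] []. apply hv; [apply h1|apply h2]; auto.
  - intros W hW x Wx. simpl in hW.
    destruct (hW _ Wx) as [V1 [V2 [v1 [v2 [x1 [x2 hv]]]]]].
    exists (fun y => V1 (ginv g y)), (fun y => V2 (ginv g y)).
    repeat split; auto.
Qed.

Lemma join_continuous X Y (O : topology Y) (T1 T2 : topology X) (s : Y -> X) :
  continuous O T1 s -> continuous O T2 s -> continuous O (join_top T1 T2) s.
Proof.
  intros c1 c2 V hV. apply topen_local. intros y Vy.
  destruct (hV _ Vy) as [V1 [V2 [v1 [v2 [x1 [x2 hv]]]]]].
  exists (fun y => V1 (s y) /\ V2 (s y)). repeat split; auto.
  - apply topen_inter; [apply c1|apply c2]; auto.
  - intros z []; auto.
Qed.

Section FinestGroupTopology.
Variables (X Y : Type) (tX : topology X) (g : group Y) (s : X -> Y).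

Definition admissible (T : topology Y) := group_topology g T /\ continuous tX T s.

Lemma admissible_indiscrete : admissible (indiscrete Y).
Proof. split; [apply indiscrete_group_topology | apply indiscrete_continuous]. Qed.

Lemma admissible_join T1 T2 : admissible T1 -> admissible T2 -> admissible (join_top T1 T2).
Proof.
  intros [a b] [c d]; split; [apply join_group_topology | apply join_continuous]; auto.
Qed.

(* The supremum of all admissible topologies; it is a topology because
   admissible topologies are closed under binary joins. *)
Definition finest_open : opens Y := fun U => forall y, U y ->
  exists T, admissible T /\ exists V, topen T V /\ V y /\ forall z, V z -> U z.

Definition finest_group_top : topology Y.
Proof.
  refine (@Topology Y finest_open _ _ _).
  - intros y _. exists (indiscrete Y); split; [apply admissible_indiscrete|].
    exists (fun _ => True). repeat split; auto. left; auto.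
  - intros U V hU hV y [Uy Vy].
    destruct (hU y Uy) as [T1 [a1 [V1 [o1 [y1 h1]]]]].
    destruct (hV y Vy) as [T2 [a2 [V2 [o2 [y2 h2]]]]].
    exists (join_top T1 T2); split; [apply admissible_join; auto|].
    exists (fun z => V1 z /\ V2 z). repeat split; auto; try (apply h1; tauto); try (apply h2; tauto).
    intros z [z1 z2]. exists V1, V2. repeat split; auto.
  - intros F hF y [U [FU Uy]].
    destruct (hF U FU y Uy) as [T [aT [V [o [yV h]]]]].
    exists T; split; auto. exists V; repeat split; auto. intros z Vz. exists U; auto.
Defined.

Lemma finest_group_top_max T U : admissible T -> topen T U -> topen finest_group_top U.
Proof. intros aT hU y Uy. exists T; split; auto. exists U; auto. Qed.

Lemma finest_group_top_admissible : admissible finest_group_top.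
Proof.
  split; [split|].
  - intros W hW p Wp.
    destruct (hW _ Wp) as [T [aT [V [o [pV h]]]]]. pose proof aT as [[hm _] _].
    destruct (hm V o p pV) as [A [B [hA [hB [Ap [Bp hAB]]]]]].
    exists A, B. repeat split; try (apply finest_group_top_max with (T := T)); auto.
  - intros W hW y Wy.
    destruct (hW _ Wy) as [T [aT [V [o [yV h]]]]]. pose proof aT as [[_ hi] _].
    exists T; split; auto. exists (fun z => V (ginv g z)); repeat split; auto.
  - intros V hV. apply topen_local. intros x Vx.
    destruct (hV _ Vx) as [T [[_ hc] [V' [o [xV h]]]]].
    exists (fun x => V' (s x)); repeat split; auto.
Qed.
End FinestGroupTopology.

Section FreeGroup.
Variable X : Type.

(* A letter (true, x) stands for x and (false, x) for its inverse. *)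
Definition letter := (bool * X)%type.
Definition word := list letter.
Definition flip (a : letter) : letter := (negb (fst a), snd a).

Lemma flipK a : flip (flip a) = a.
Proof. destruct a as [[] x]; reflexivity. Qed.

Inductive reduce_step : word -> word -> Prop :=
  reduce_step_intro u v a : reduce_step (u ++ a :: flip a :: v) (u ++ v).

Definition word_eqv := clos_refl_sym_trans word reduce_step.

Lemma word_eqv_sym u v : word_eqv u v -> word_eqv v u. Proof. apply rst_sym. Qed.
Lemma word_eqv_trans u v w : word_eqv u v -> word_eqv v w -> word_eqv u w.
Proof. apply rst_trans. Qed.

Lemma word_eqv_appl w u v : word_eqv u v -> word_eqv (w ++ u) (w ++ v).
Proof.
  induction 1 as [? ? [u v a]| | |].
  - apply rst_step. rewrite !app_assoc. constructor.
  - apply rst_refl.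
  - apply rst_sym; auto.
  - eapply rst_trans; eauto.
Qed.

Lemma word_eqv_appr w u v : word_eqv u v -> word_eqv (u ++ w) (v ++ w).
Proof.
  induction 1 as [? ? [u v a]| | |].
  - apply rst_step. rewrite <- !app_assoc. simpl. constructor.
  - apply rst_refl.
  - apply rst_sym; auto.
  - eapply rst_trans; eauto.
Qed.

Definition word_inv (w : word) : word := rev (map flip w).

Lemma word_invK w : word_inv (word_inv w) = w.
Proof.
  unfold word_inv. rewrite map_rev, rev_involutive, map_map.
  transitivity (map (fun x => x) w); [apply map_ext; apply flipK | apply map_id].
Qed.

Lemma word_eqv_inv u v : word_eqv u v -> word_eqv (word_inv u) (word_inv v).
Proof.
  induction 1 as [? ? [u v a]| | |].
  - apply rst_step. unfold word_inv. rewrite !map_app, !rev_app_distr. simpl.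
    rewrite <- !app_assoc. simpl.
    pose proof (reduce_step_intro (rev (map flip v)) (rev (map flip u)) (flip (flip a))) as h.
    rewrite flipK in h at 2. exact h.
  - apply rst_refl.
  - apply rst_sym; auto.
  - eapply rst_trans; eauto.
Qed.

Lemma word_eqv_cancel w : word_eqv (w ++ word_inv w) [].
Proof.
  induction w as [|a w IH].
  - apply rst_refl.
  - unfold word_inv. simpl. rewrite app_assoc.
    apply word_eqv_trans with (a :: [flip a]).
    + change (word_eqv ([a] ++ ((w ++ rev (map flip w)) ++ [flip a])) ([a] ++ ([] ++ [flip a]))).
      apply word_eqv_appl, word_eqv_appr, IH.
    + apply rst_step. apply (reduce_step_intro [] [] a).
Qed.

Lemma word_eqv_cancel_l w : word_eqv (word_inv w ++ w) [].
Proof. pose proof (word_eqv_cancel (word_inv w)) as h. rewrite word_invK in h. exact h. Qed.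

Definition free_car := { P : word -> Prop | exists w, P = word_eqv w }.
Definition fg_class (w : word) : free_car := exist _ (word_eqv w) (ex_intro _ w eq_refl).
Definition fg_repr (p : free_car) : word :=
  proj1_sig (constructive_indefinite_description _ (proj2_sig p)).

Lemma fg_class_eq u v : word_eqv u v -> fg_class u = fg_class v.
Proof.
  intros h. unfold fg_class.
  assert (e : word_eqv u = word_eqv v).
  { apply functional_extensionality; intros w. apply propositional_extensionality.
    split; intros; eapply word_eqv_trans; eauto using word_eqv_sym. }
  generalize (ex_intro (fun w => word_eqv u = word_eqv w) u eq_refl).
  rewrite e. intros. f_equal. apply proof_irrelevance.
Qed.

Lemma fg_class_inj u v : fg_class u = fg_class v -> word_eqv u v.
Proof.
  intros h. apply (f_equal (@proj1_sig _ _)) in h. simpl in h.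
  rewrite h. apply rst_refl.
Qed.

Lemma fg_class_repr p : fg_class (fg_repr p) = p.
Proof.
  destruct p as [P hP]. unfold fg_repr, fg_class. simpl.
  destruct (constructive_indefinite_description _ hP) as [w e]. simpl. subst P.
  f_equal. apply proof_irrelevance.
Qed.

Lemma fg_repr_class w : word_eqv (fg_repr (fg_class w)) w.
Proof. apply fg_class_inj. rewrite fg_class_repr. reflexivity. Qed.

Definition fg_mul (p q : free_car) := fg_class (fg_repr p ++ fg_repr q).
Definition fg_inv (p : free_car) := fg_class (word_inv (fg_repr p)).

Lemma fg_mul_class u v : fg_mul (fg_class u) (fg_class v) = fg_class (u ++ v).
Proof.
  apply fg_class_eq. eapply word_eqv_trans.
  - apply word_eqv_appr, fg_repr_class.
  - apply word_eqv_appl, fg_repr_class.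
Qed.

Lemma fg_inv_class u : fg_inv (fg_class u) = fg_class (word_inv u).
Proof. apply fg_class_eq, word_eqv_inv, fg_repr_class. Qed.

Definition free_group : group free_car.
Proof.
  refine (@Group free_car fg_mul fg_inv (fg_class []) _ _ _).
  - intros x y z. rewrite <- (fg_class_repr x), <- (fg_class_repr y), <- (fg_class_repr z).
    rewrite !fg_mul_class, app_assoc. reflexivity.
  - intros x. rewrite <- (fg_class_repr x), fg_mul_class. reflexivity.
  - intros x. rewrite <- (fg_class_repr x), fg_inv_class, fg_mul_class.
    apply fg_class_eq, word_eqv_cancel_l.
Defined.

Definition fg_gen (x : X) : free_car := fg_class [(true, x)].

Section Lift.
Variables (K : Type) (gK : group K) (phi : X -> K).

Definition eval_letter (a : letter) : K :=
  if fst a then phi (snd a) else ginv gK (phi (snd a)).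

Definition eval_word (w : word) : K :=
  fold_right (fun a acc => gmul gK (eval_letter a) acc) (gone gK) w.

Lemma eval_word_app u v : eval_word (u ++ v) = gmul gK (eval_word u) (eval_word v).
Proof. induction u as [|a u IH]; simpl; [rewrite gmul1 | rewrite IH, gassoc]; reflexivity. Qed.

Lemma eval_letter_flip a : gmul gK (eval_letter a) (eval_letter (flip a)) = gone gK.
Proof. destruct a as [[] x]; simpl; [apply gmulrV | apply gmulV]. Qed.

Lemma eval_word_eqv u v : word_eqv u v -> eval_word u = eval_word v.
Proof.
  induction 1 as [? ? [u v a]| | |]; [| reflexivity | congruence | congruence].
  rewrite !eval_word_app. simpl.
  rewrite (gassoc gK (eval_letter a)), eval_letter_flip, gmul1. reflexivity.
Qed.

Definition fg_lift (p : free_car) : K := eval_word (fg_repr p).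

Lemma fg_lift_class w : fg_lift (fg_class w) = eval_word w.
Proof. apply eval_word_eqv, fg_repr_class. Qed.

Lemma fg_lift_hom : ghom free_group gK fg_lift.
Proof. intros p q. simpl. unfold fg_mul. rewrite fg_lift_class, eval_word_app. reflexivity. Qed.

Lemma fg_lift_gen x : fg_lift (fg_gen x) = phi x.
Proof. unfold fg_gen. rewrite fg_lift_class. simpl. apply gmulr1. Qed.

Lemma fg_lift_unique (f : free_car -> K) : ghom free_group gK f ->
  (forall x, f (fg_gen x) = phi x) -> forall p, f p = fg_lift p.
Proof.
  intros hf hgen p. rewrite <- (fg_class_repr p), fg_lift_class. generalize (fg_repr p). clear p.
  induction w as [|a w IH]; [apply (ghom_one hf)|].
  change (a :: w) with ([a] ++ w). rewrite <- fg_mul_class.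
  change (f (gmul free_group (fg_class [a]) (fg_class w)) = eval_word ([a] ++ w)).
  rewrite hf, IH, eval_word_app. f_equal. simpl. rewrite gmulr1.
  destruct a as [[] x]; simpl; [apply hgen|].
  apply ginv_uniq. rewrite <- hgen, <- hf. simpl. unfold fg_gen.
  rewrite fg_mul_class, <- (ghom_one hf). f_equal.
  apply fg_class_eq, rst_step, (reduce_step_intro [] [] (false, x)).
Qed.
End Lift.
End FreeGroup.

Definition free_markov_group (X : Type) (tX : topology X) : grpwtop :=
  @GrpwTop (free_car X) (free_group X) (finest_group_top tX (free_group X) (@fg_gen X)).

Lemma free_markov_group_spec (X : Type) (tX : topology X) :
  free_markov tX (free_markov_group tX) (@fg_gen X).
Proof.
  destruct (finest_group_top_admissible tX (free_group X) (@fg_gen X)) as [hF hs].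
  split; [exact hF | split; [exact hs|]].
  intros K phi hK hphi.
  exists (fg_lift (ggrp K) phi). split; [|split; [|split]].
  - apply fg_lift_hom.
  - intros V hV. apply finest_group_top_max with (T := initial_top (gtop K) (fg_lift (ggrp K) phi)).
    + split; [apply initial_group_topology with (gY := ggrp K); [apply fg_lift_hom | exact hK]|].
      intros U [U' [hU' eU]]. apply opens_ext with (U := fun x => U' (phi x)).
      * apply hphi; auto.
      * intros x. rewrite eU, fg_lift_gen. tauto.
    + apply initial_top_preimage; auto.
  - apply fg_lift_gen.
  - intros f hf _ hgen. apply fg_lift_unique; auto.
Qed.

Lemma free_markov_hom_ext X (tX : topology X) (F : grpwtop) (s : X -> F) K (gK : group K)
    (f1 f2 : F -> K) :
  free_markov tX F s -> ghom (ggrp F) gK f1 -> ghom (ggrp F) gK f2 ->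
  (forall x, f1 (s x) = f2 (s x)) -> forall w, f1 w = f2 w.
Proof.
  intros [_ [_ u]] h1 h2 e w.
  destruct (u (@GrpwTop K gK (indiscrete K)) (fun x => f1 (s x)))
    as [psi [_ [_ [_ upsi]]]];
    [apply indiscrete_group_topology | apply indiscrete_continuous|].
  rewrite (upsi f1 h1 (indiscrete_continuous _ _) (fun _ => eq_refl) w).
  rewrite (upsi f2 h2 (indiscrete_continuous _ _) (fun x => eq_sym (e x)) w).
  reflexivity.
Qed.

Lemma free_markov_mult_exists (G F : grpwtop) (s : G -> F) : free_markov (gtop G) F s ->
  exists m : F -> G, ghom (ggrp F) (ggrp G) m /\ forall g, m (s g) = g.
Proof.
  intros [_ [_ u]].
  destruct (u (@GrpwTop G (ggrp G) (indiscrete G)) (fun g => g)) as [m [hm [_ [hs _]]]];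
    [apply indiscrete_group_topology | apply indiscrete_continuous | exists m; auto].
Qed.

Definition tau_top (G : grpwtop) : topology G :=
  finest_group_top (gtop G) (ggrp G) (fun g => g).

Section Multiplication.
Variables (G F : grpwtop) (s : G -> F) (m : F -> G).
Hypotheses (fm : free_markov (gtop G) F s) (hm : ghom (ggrp F) (ggrp G) m)
  (hs : forall g, m (s g) = g).

Lemma mult_preimage_open T U :
  admissible (gtop G) (ggrp G) (fun g => g) T -> topen T U -> topen (gtop F) (fun w => U (m w)).
Proof.
  intros [hT hc] hU. pose proof fm as [_ [_ u]].
  destruct (u (@GrpwTop G (ggrp G) T) (fun g => g) hT hc) as [psi [hp [cp [sp _]]]].
  apply opens_ext with (U := fun w => U (psi w)); [apply cp; auto|].
  intros w. rewrite (free_markov_hom_ext fm hm hp (fun g => eq_trans (hs g) (eq_sym (sp g))) w).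
  tauto.
Qed.

Lemma admissible_mult_quotient :
  admissible (gtop G) (ggrp G) (fun g => g) (quotient_top (gtop F) m).
Proof.
  pose proof fm as [hF [cs _]]. split.
  - apply quotient_group_topology with (gX := ggrp F); auto. intros g; exists (s g); auto.
  - intros V hV. apply opens_ext with (U := fun g => V (m (s g))); [apply (cs _ hV)|].
    intros g; rewrite hs; tauto.
Qed.
End Multiplication.

Lemma tau_open_eq (G : grpwtop) : tau_open G = topen (tau_top G).
Proof.
  apply functional_extensionality; intros U; apply propositional_extensionality; split.
  - intros h. pose proof (free_markov_group_spec (gtop G)) as fm.
    destruct (free_markov_mult_exists fm) as [m [hm hs]].
    apply finest_group_top_max with (T := quotient_top (gtop (free_markov_group (gtop G))) m).
    + apply admissible_mult_quotient with (s := @fg_gen G); auto.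
    + exact (h _ _ m fm hm hs).
  - intros h F s m fm hm hs.
    apply (mult_preimage_open fm hm hs (finest_group_top_admissible _ _ _) h).
Qed.

Lemma tau_group_topology (G : grpwtop) : group_topology (ggrp G) (tau_top G).
Proof. apply finest_group_top_admissible. Qed.

Lemma tau_coarser (G : grpwtop) U : topen (tau_top G) U -> topen (gtop G) U.
Proof. apply (finest_group_top_admissible (gtop G) (ggrp G) (fun g => g)). Qed.

Lemma tau_max (G : grpwtop) (T : topology G) U :
  group_topology (ggrp G) T -> (forall V, topen T V -> topen (gtop G) V) ->
  topen T U -> topen (tau_top G) U.
Proof. intros hT hc. apply finest_group_top_max. split; auto. Qed.

Lemma tau_preimage (G H : grpwtop) (f : G -> H) V :
  ghom (ggrp G) (ggrp H) f -> continuous (gtop G) (gtop H) f ->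
  topen (tau_top H) V -> topen (tau_top G) (fun x => V (f x)).
Proof.
  intros hf cf hV. apply tau_max with (T := initial_top (tau_top H) f).
  - apply initial_group_topology with (gY := ggrp H); [exact hf | apply tau_group_topology].
  - intros U [U' [hU' eU]]. apply opens_ext with (U := fun x => U' (f x)).
    + apply cf, tau_coarser, hU'.
    + intros x; rewrite eU; tauto.
  - apply initial_top_preimage, hV.
Qed.

Lemma tau_prod (G H : grpwtop) W :
  topen (tau_top (prod_gwt G H)) W <-> prod_open (tau_top G) (tau_top H) W.
Proof.
  split.
  - intros hW p Wp. pose proof (tau_group_topology (prod_gwt G H)) as [hm _].
    set (a := (fst p, gone (ggrp H))). set (b := (gone (ggrp G), snd p)).
    assert (Wab : W (gmul (ggrp (prod_gwt G H)) a b)).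
    { simpl. rewrite gmulr1, gmul1, <- surjective_pairing. exact Wp. }
    destruct (hm W hW (a, b) Wab) as [A [B [hA [hB [Aa [Bb hAB]]]]]].
    exists (fun x => A (x, gone (ggrp H))), (fun y => B (gone (ggrp G), y)).
    repeat split; auto.
    + apply tau_preimage with (f := fun x : G => (x, gone (ggrp H))); auto.
      * intros x y. simpl. rewrite gmul1. reflexivity.
      * intros V hV. apply prod_open_slicel with (O2 := topen (gtop H)), hV.
    + apply tau_preimage with (f := fun y : H => (gone (ggrp G), y)); auto.
      * intros x y. simpl. rewrite gmul1. reflexivity.
      * intros V hV. apply prod_open_slicer with (O1 := topen (gtop G)), hV.
    + intros q Aq Bq. pose proof (hAB ((fst q, gone (ggrp H)), (gone (ggrp G), snd q)) Aq Bq) as r.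
      simpl in r. rewrite gmulr1, gmul1, <- surjective_pairing in r. exact r.
  - apply tau_max
      with (T := prod_topology (@GrpwTop G (ggrp G) (tau_top G)) (@GrpwTop H (ggrp H) (tau_top H))).
    + apply (prod_group_topology (tau_group_topology G) (tau_group_topology H)).
    + apply prod_open_mono; apply tau_coarser.
Qed.

Lemma tau_quotient_map (G H : grpwtop) (f : G -> H) :
  is_hom f -> quotient_map (gtop G) (gtop H) f -> quotient_map (tau_top G) (tau_top H) f.
Proof.
  intros hf [sf qf]. split; [exact sf|]. intros V. split.
  - apply tau_preimage; auto. intros U hU. apply qf, hU.
  - apply tau_max with (T := quotient_top (tau_top G) f).
    + apply (quotient_group_topology (gX := ggrp G)); auto. apply tau_group_topology.
    + intros V' hV'. apply qf, tau_coarser, hV'.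
Qed.

Lemma tau_eq_iff_topological (G : grpwtop) :
  is_topological_group G <-> (forall U, topen (gtop G) U <-> topen (tau_top G) U).
Proof.
  split.
  - intros h U. split; [apply tau_max with (T := gtop G); auto | apply tau_coarser].
  - intros h. apply group_topology_ext with (topen (tau_top G)); [apply tau_group_topology|].
    intros U; split; apply h.
Qed.

Lemma tau_discrete_iff (G : grpwtop) : discrete (gtop G) <-> discrete (tau_top G).
Proof.
  split.
  - intros d U. apply tau_max with (T := gtop G); auto. apply discrete_group_topology, d.
  - intros d U. apply tau_coarser, d.
Qed.

Theorem proposition3p3 :
  (* (1) tau preserves finite products *)
  (forall (G H : grpwtop) (W : G * H -> Prop),
      tau_open (prod_gwt G H) W <-> prod_open (tau_open G) (tau_open H) W) /\
  (* (2) tau preserves quotient homomorphisms *)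
  (forall (G H : grpwtop) (f : G -> H),
      is_hom f -> quotient_map (gtop G) (gtop H) f ->
      quotient_map (tau_open G) (tau_open H) f) /\
  (* (3) G is a topological group iff G = tau(G) *)
  (forall G : grpwtop,
      is_topological_group G <-> (forall U, topen (gtop G) U <-> tau_open G U)) /\
  (* (4) G discrete iff tau(G) discrete *)
  (forall G : grpwtop, discrete (gtop G) <-> discrete (tau_open G)).
Proof.
  split; [|split; [|split]].
  - intros G H W. rewrite !tau_open_eq. apply tau_prod.
  - intros G H f. rewrite !tau_open_eq. apply tau_quotient_map.
  - intros G. rewrite tau_open_eq. apply tau_eq_iff_topological.
  - intros G. rewrite tau_open_eq. apply tau_discrete_iff.
Qed.
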